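(* Let $\Gamma(X,Y,E')$ be a connected bipartite graph with $m=|X|$, $n=|Y|$, and let $W=R_1R_0$ be the (extended) Szegedy walk operator on $\mathcal{H}^{m}\otimes\mathcal{H}^{n}$ defined from right-stochastic matrices $P=(p_{xy})$, $Q=(q_{yx})$ and real phases $\theta_{xy},\theta'_{xy}$ as described in the context. Let $\mathcal{H}_E\subset \mathcal{H}^{m}\otimes\mathcal{H}^{n}$ be the subspace spanned by $\{\ket{x}\otimes\ket{y}: \{x,y\}\in E'\}$. Then $W(\mathcal{H}_E)=\mathcal{H}_E$ and $W$ acts as the identity on $\mathcal{H}_E^{\perp}$; i.e., in a basis adapted to $\mathcal{H}_E\oplus\mathcal{H}_E^\perp$, $W=W|_{\mathcal{H}_E}\oplus I$.
   Context: Szegedy's QW: Let $\Gamma(X,Y,E')$ be a connected bipartite graph with biadjacency matrix $M$ ($M_{x,y}=1$ if $\{x,y\}\in E'$, else $0$). Let $P$ be an $m\times n$ right-stochastic matrix with entries $p_{xy}\ge 0$ such that $M_{x,y}=0\Rightarrow p_{xy}=0$, and $Q$ an $n\times m$ right-stochastic matrix with entries $q_{yx}\ge0$ such that $M_{x,y}=0\Rightarrow q_{yx}=0$. On $\mathcal{H}^{m}\otimes\mathcal{H}^{n}$ with computational basis $\{\ket{x,y}=\ket{x}\otimes\ket{y}: x\in X,y\in Y\}$ define, for real $\theta_{xy},\theta'_{xy}$, $\ket{\phi_x}=\sum_{y\in Y}\sqrt{p_{xy}}e^{i\theta_{xy}}\ket{x,y}$ and $\ket{\psi_y}=\sum_{x\in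 X}\sqrt{q_{yx}}e^{i\theta'_{xy}}\ket{x,y}$, and $R_0=2\sum_{x\in X}\ket{\phi_x}\bra{\phi_x}-I$, $R_1=2\sum_{y\in Y}\ket{\psi_y}\bra{\psi_y}-I$, $W=R_1R_0$. (Szegedy's original model has all phases zero; allowing nonzero phases gives the extended Szegedy QW.) *)

From HB Require Import structures.
From mathcomp Require Import all_boot all_order all_algebra.
From mathcomp Require Import complex mxtens.
From mathcomp Require Import reals trigo.
Set Implicit Arguments. Unset Strict Implicit. Unset Printing Implicit Defensive.
Import Order.TTheory GRing.Theory Num.Theory.
Local Open Scope ring_scope.
Local Open Scope complex_scope.

Definition expi (R : realType) (t : R) : R[i] := (cos t)%:C + 'i * (sin t)%:C.

Definition adj (R : realType) p q (A : 'M[R[i]]_(p, q)) : 'M[R[i]]_(q, p) :=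
  (map_mx Num.conj A)^T.

Definition ket (R : realType) m n (x : 'I_m) (y : 'I_n) : 'cV[R[i]]_(m * n) :=
  (delta_mx x ord0 : 'cV[R[i]]_m) *t (delta_mx y ord0 : 'cV[R[i]]_n).

(* bipartite graph Gamma(X,Y,E') with X = 'I_m, Y = 'I_n; E x y <=> {x,y} in E'
   (i.e. E is the biadjacency matrix M). Vertex set X + Y. *)
Definition bip_adj m n (E : 'I_m -> 'I_n -> bool) : rel ('I_m + 'I_n) :=
  fun a b => match a, b with
             | inl x, inr y => E x y
             | inr y, inl x => E x y
             | _, _ => false
             end.
Definition bip_connected m n (E : 'I_m -> 'I_n -> bool) : Prop :=
  forall a b : 'I_m + 'I_n, connect (bip_adj E) a b.

Definition phi_vec (R : realType) m n (P : 'M[R]_(m, n)) (th : 'I_m -> 'I_n -> R)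
  (x : 'I_m) : 'cV[R[i]]_(m * n) :=
  \sum_(y < n) (((Num.sqrt (P x y))%:C * expi (th x y)) *: ket R x y).

Definition psi_vec (R : realType) m n (Q : 'M[R]_(n, m)) (th' : 'I_m -> 'I_n -> R)
  (y : 'I_n) : 'cV[R[i]]_(m * n) :=
  \sum_(x < m) (((Num.sqrt (Q y x))%:C * expi (th' x y)) *: ket R x y).

Definition R0op (R : realType) m n (P : 'M[R]_(m, n)) th : 'M[R[i]]_(m * n) :=
  2%:R *: (\sum_(x < m) (phi_vec P th x *m adj (phi_vec P th x))) - 1%:M.

Definition R1op (R : realType) m n (Q : 'M[R]_(n, m)) th' : 'M[R[i]]_(m * n) :=
  2%:R *: (\sum_(y < n) (psi_vec Q th' y *m adj (psi_vec Q th' y))) - 1%:M.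

Definition Wop (R : realType) m n (P : 'M[R]_(m, n)) (Q : 'M[R]_(n, m)) th th'
  : 'M[R[i]]_(m * n) := R1op Q th' *m R0op P th.

(* H_E = span{ |x,y> : {x,y} in E' }, represented as a row space (of transposes) *)
Definition HE_mx (R : realType) m n (E : 'I_m -> 'I_n -> bool) : 'M[R[i]]_(m * n) :=
  (\sum_(x < m) \sum_(y < n | E x y) <<(ket R x y)^T>>)%MS.

Definition in_HE (R : realType) m n (E : 'I_m -> 'I_n -> bool) (v : 'cV[R[i]]_(m * n)) : bool :=
  ((v^T) <= HE_mx R E)%MS.

Definition in_HE_perp (R : realType) m n (E : 'I_m -> 'I_n -> bool) (v : 'cV[R[i]]_(m * n)) : Prop :=
  forall u : 'cV[R[i]]_(m * n), in_HE E u -> adj u *m v = 0.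

Definition right_stochastic (R : realType) p q (A : 'M[R]_(p, q)) : Prop :=
  (forall i j, 0 <= A i j) /\ (forall i, \sum_(j < q) A i j = 1).

From HB Require Import structures.
From mathcomp Require Import all_boot all_order all_algebra.
From mathcomp Require Import complex mxtens.
From mathcomp Require Import reals trigo.
Set Implicit Arguments. Unset Strict Implicit. Unset Printing Implicit Defensive.
Import Order.TTheory GRing.Theory Num.Theory.
Local Open Scope ring_scope.
Local Open Scope complex_scope.

(* Both R_0 and R_1 have the form 2 Pi - I, where Pi is the orthogonal
   projection onto the span of an orthonormal family lying in H_E (the phi_x,
   resp. the psi_y, are orthonormal because P and Q are stochastic, and lie in
   H_E because P and Q vanish off the edges).  Such a reflection is an
   involution that maps H_E into itself and is -I on H_E^perp.  Hence
   W = R_1 R_0 maps H_E into itself with inverse R_0 R_1, also mapping H_E into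
   itself, and W = (-I)(-I) = I on H_E^perp. *)

Section Adjoint.
Variable R : realType.

Lemma adjZ p q (a : R[i]) (A : 'M[R[i]]_(p, q)) : adj (a *: A) = Num.conj a *: adj A.
Proof. by apply/matrixP => i j; rewrite !mxE rmorphM. Qed.

Lemma adj_sum p q (I : finType) (F : I -> 'M[R[i]]_(p, q)) :
  adj (\sum_k F k) = \sum_k adj (F k).
Proof.
apply/matrixP => i j; rewrite !(mxE, summxE) rmorph_sum.
by apply: eq_bigr => k _; rewrite !mxE.
Qed.

Lemma adj_delta N (i : 'I_N) : adj (delta_mx i 0 : 'cV[R[i]]_N) = delta_mx 0 i.
Proof. by apply/matrixP => a b; rewrite !mxE rmorph_nat andbC. Qed.

End Adjoint.

Section Reflection.
Variables (R : realType) (N : nat) (I : finType) (f : I -> 'cV[R[i]]_N).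

Definition orthonormal := forall i j, adj (f i) *m f j = (i == j)%:R%:M.

Definition proj_span : 'M[R[i]]_N := \sum_i f i *m adj (f i).

Definition refl_span : 'M[R[i]]_N := 2%:R *: proj_span - 1%:M.

Lemma proj_span_idem : orthonormal -> proj_span *m proj_span = proj_span.
Proof.
move=> fo; rewrite mulmx_suml; apply: eq_bigr => i _.
have fifj j : f i *m adj (f i) *m (f j *m adj (f j)) = (i == j)%:R *: (f i *m adj (f j)).
  by rewrite mulmxA -(mulmxA (f i)) fo mul_mx_scalar -scalemxAl.
rewrite mulmx_sumr (bigD1 i) //= fifj eqxx scale1r big1 ?addr0 // => j ji.
by rewrite fifj eq_sym (negPf ji) scale0r.
Qed.

Lemma refl_span_invol : orthonormal -> refl_span *m refl_span = 1%:M.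
Proof.
move=> fo; rewrite /refl_span mulmxBl !mulmxBr !mulmx1 mul1mx.
rewrite -scalemxAl -scalemxAr proj_span_idem // scalerA.
have -> : (2%:R * 2%:R : R[i]) = 2%:R + 2%:R by rewrite -natrM -natrD.
by rewrite scalerDl addrK opprB addrC subrK.
Qed.

Lemma refl_span_perp (v : 'cV[R[i]]_N) :
  (forall i, adj (f i) *m v = 0) -> refl_span *m v = - v.
Proof.
move=> fv; rewrite mulmxBl mul1mx -scalemxAl mulmx_suml big1 ?scaler0 ?sub0r //.
by move=> i _; rewrite -mulmxA fv mulmx0.
Qed.

Variables (r : nat) (S : 'M[R[i]]_(r, N)).
Hypothesis f_sub : forall i, ((f i)^T <= S)%MS.

Lemma proj_span_sub (v : 'cV[R[i]]_N) : ((proj_span *m v)^T <= S)%MS.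
Proof.
rewrite mulmx_suml linear_sum; apply/summx_sub => i _.
by rewrite -mulmxA [adj _ *m _]mx11_scalar mul_mx_scalar linearZ /= scalemx_sub.
Qed.

Lemma refl_span_sub (v : 'cV[R[i]]_N) :
  (v^T <= S)%MS -> ((refl_span *m v)^T <= S)%MS.
Proof.
move=> vS; rewrite mulmxBl mul1mx -scalemxAl linearB linearZ /=.
by rewrite addmx_sub ?eqmx_opp ?scalemx_sub ?proj_span_sub.
Qed.

End Reflection.

Section AmplitudeStates.
Variable R : realType.

Definition amp (p t : R) : R[i] := (Num.sqrt p)%:C * expi t.

Lemma amp0 t : amp 0 t = 0.
Proof. by rewrite /amp sqrtr0 mul0r. Qed.

Lemma conj_amp_mul p t : 0 <= p -> Num.conj (amp p t) * amp p t = p%:C.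
Proof.
move=> p_ge0; rewrite -normCKC /amp /expi normc_def /=; simpc.
rewrite -rmorphXn sqr_sqrtr ?addr_ge0 ?sqr_ge0 // !exprMn sqr_sqrtr //.
by rewrite -mulrDr cos2Dsin2 mulr1.
Qed.

Variables (I J : finType) (N : nat) (e : I -> J -> 'cV[R[i]]_N).
Hypothesis e_orthonormal :
  forall i j i' j', adj (e i j) *m e i' j' = ((i == i') && (j == j'))%:R%:M.

Definition amp_state (A t : I -> J -> R) (i : I) : 'cV[R[i]]_N :=
  \sum_j amp (A i j) (t i j) *: e i j.

Lemma amp_state_orthonormal (A t : I -> J -> R) :
  (forall i j, 0 <= A i j) -> (forall i, \sum_j A i j = 1) ->
  orthonormal (amp_state A t).
Proof.
move=> A_ge0 A_sum1 i i'; rewrite adj_sum mulmx_suml.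
have dot j j' :
    adj (amp (A i j) (t i j) *: e i j) *m (amp (A i' j') (t i' j') *: e i' j')
    = (Num.conj (amp (A i j) (t i j)) * amp (A i' j') (t i' j')
       * ((i == i') && (j == j'))%:R)%:M.
  by rewrite adjZ -scalemxAl -scalemxAr e_orthonormal !scale_scalar_mx mulrA.
case: (eqVneq i i') dot => [<- | ii'] dot.
  rewrite (eq_bigr (fun j => (A i j)%:C%:M)) => [|j _].
    by rewrite -raddf_sum -rmorph_sum A_sum1.
  rewrite mulmx_sumr (bigD1 j) //= dot eqxx /= mulr1 conj_amp_mul //.
  by rewrite big1 ?addr0 // => j' j'j; rewrite dot eq_sym (negPf j'j) mulr0 raddf0.
rewrite big1; first by rewrite raddf0.
by move=> j _; rewrite mulmx_sumr big1 // => j' _; rewrite dot mulr0 raddf0.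
Qed.

Lemma amp_state_sub r (S : 'M[R[i]]_(r, N)) (A t : I -> J -> R) i :
  (forall j, A i j != 0 -> ((e i j)^T <= S)%MS) -> ((amp_state A t i)^T <= S)%MS.
Proof.
move=> e_sub; rewrite linear_sum; apply/summx_sub => j _.
have [->|Aij] := eqVneq (A i j) 0; first by rewrite amp0 scale0r linear0 sub0mx.
by rewrite linearZ /= scalemx_sub ?e_sub.
Qed.

End AmplitudeStates.

Section TwoReflections.
Variables (R : realType) (N r : nat) (S : 'M[R[i]]_(r, N)).
Variables (I J : finType) (f : I -> 'cV[R[i]]_N) (g : J -> 'cV[R[i]]_N).
Hypotheses (f_on : orthonormal f) (g_on : orthonormal g).
Hypotheses (f_sub : forall i, ((f i)^T <= S)%MS) (g_sub : forall j, ((g j)^T <= S)%MS).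

Lemma refl_span_mul_sub (v : 'cV[R[i]]_N) :
  (v^T <= S)%MS -> ((refl_span g *m refl_span f *m v)^T <= S)%MS.
Proof. by move=> vS; rewrite -mulmxA !refl_span_sub. Qed.

Lemma refl_span_mul_onto (v : 'cV[R[i]]_N) :
  (v^T <= S)%MS ->
  exists2 u : 'cV[R[i]]_N, (u^T <= S)%MS & refl_span g *m refl_span f *m u = v.
Proof.
move=> vS; exists (refl_span f *m (refl_span g *m v)); first by rewrite !refl_span_sub.
rewrite !mulmxA -(mulmxA (refl_span g) (refl_span f)) refl_span_invol // mulmx1.
by rewrite refl_span_invol // mul1mx.
Qed.

Lemma refl_span_mul_perp (v : 'cV[R[i]]_N) :
  (forall u : 'cV[R[i]]_N, (u^T <= S)%MS -> adj u *m v = 0) ->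
  refl_span g *m refl_span f *m v = v.
Proof.
move=> v_perp; rewrite -mulmxA (refl_span_perp (fun i => v_perp _ (f_sub i))).
by rewrite mulmxN (refl_span_perp (fun j => v_perp _ (g_sub j))) opprK.
Qed.

End TwoReflections.

Section Kets.
Variables (R : realType) (m n : nat).

Lemma ketE (x : 'I_m) (y : 'I_n) : ket R x y = delta_mx (mxtens_index (x, y)) 0.
Proof.
apply/matrixP => a b; rewrite /ket /tensmx !mxE !ord1.
case: a / (mxtens_indexP a) => i j; rewrite mxtens_indexK (can_eq (@mxtens_indexK _ _)).
by rewrite xpair_eqE; case: (i == x); case: (j == y); rewrite /= ?mulr1 ?mulr0.
Qed.

Lemma ket_dot (x : 'I_m) (y : 'I_n) (x' : 'I_m) (y' : 'I_n) :
  adj (ket R x y) *m ket R x' y' = ((x == x') && (y == y'))%:R%:M.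
Proof.
rewrite !ketE adj_delta mul_delta_mx_cond (can_eq (@mxtens_indexK _ _)) xpair_eqE.
by rewrite raddfMn; congr (_ *+ _); apply/matrixP => a b; rewrite !ord1 !mxE.
Qed.

Definition ket_swap (y : 'I_n) (x : 'I_m) := ket R x y.

Lemma ket_swap_dot (y : 'I_n) (x : 'I_m) (y' : 'I_n) (x' : 'I_m) :
  adj (ket_swap y x) *m ket_swap y' x' = ((y == y') && (x == x'))%:R%:M.
Proof. by rewrite ket_dot andbC. Qed.

Lemma ket_sub (E : 'I_m -> 'I_n -> bool) (x : 'I_m) (y : 'I_n) :
  E x y -> in_HE E (ket R x y).
Proof.
move=> Exy; rewrite /in_HE /HE_mx.
by apply: (sumsmx_sup x) => //; apply: (sumsmx_sup y) => //; rewrite genmxE.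
Qed.

End Kets.

Theorem lemma1 (R : realType) (m n : nat) (E : 'I_m -> 'I_n -> bool)
  (P : 'M[R]_(m, n)) (Q : 'M[R]_(n, m)) (th th' : 'I_m -> 'I_n -> R) :
  bip_connected E ->
  right_stochastic P -> (forall x y, ~~ E x y -> P x y = 0) ->
  right_stochastic Q -> (forall x y, ~~ E x y -> Q y x = 0) ->
  let W := Wop P Q th th' in
  (forall v, in_HE E v -> in_HE E (W *m v)) /\
  (forall v, in_HE E v -> exists2 u, in_HE E u & W *m u = v) /\
  (forall v, in_HE_perp E v -> W *m v = v).
Proof.
move=> _ [P_ge0 P_sum1] P_supp [Q_ge0 Q_sum1] Q_supp W.
(* phi_vec P th and psi_vec Q th' are amp_states over the kets |x,y>, indexed
   by x and by y respectively. *)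
have phi_on : orthonormal (phi_vec P th) :=
  amp_state_orthonormal (@ket_dot R m n) th P_ge0 P_sum1.
have psi_on : orthonormal (psi_vec Q th') :=
  amp_state_orthonormal (@ket_swap_dot R m n) (fun y x => th' x y) Q_ge0 Q_sum1.
have phi_sub x : in_HE E (phi_vec P th x).
  apply: (amp_state_sub (e := @ket R m n) (A := P)) => y.
  by move/(contra_neqT (P_supp x y)); apply: ket_sub.
have psi_sub y : in_HE E (psi_vec Q th' y).
  apply: (amp_state_sub (e := @ket_swap R m n) (A := Q) (fun y x => th' x y)) => x.
  by move/(contra_neqT (Q_supp x y)); apply: ket_sub.
split; [|split] => v.
- exact: refl_span_mul_sub phi_sub psi_sub v.
- exact: refl_span_mul_onto phi_on psi_on phi_sub psi_sub v.
- exact: refl_span_mul_perp phi_sub psi_sub v.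
Qed.
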